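(* Suppose that $\kappa = \nu^+$, and $J$ is a $\kappa$-complete ideal on $\kappa$ such that $\clubsuit_\kappa^{{\rm cof},-}[J]$ holds. Then there exist $A^i_\delta \in P_\nu(\kappa\times\kappa)$ for $\delta<\kappa$ and $i<\nu$ such that for any $F : \kappa\to\kappa$, the set $\{\delta<\kappa : \exists i<\nu\,\exists Z\subseteq\delta\,(\sup Z = \delta \text{ and } F|Z \subseteq A^i_\delta)\}$ lies in $J^+$ (where $F|Z$ is identified with its graph $\{(\alpha, F(\alpha)) : \alpha \in Z\}$).
   Context: An ideal on $\kappa$ is a nonempty $J \subseteq P(\kappa)$ with $\kappa \notin J$, every bounded subset of $\kappa$ in $J$, $J$ closed under subsets and under unions of two members; $J^+ = P(\kappa)\setminus J$; $\kappa$-complete means closed under unions of fewer than $\kappa$ members. $P_\rho(X) = \{x\subseteq X : |x|<\rho\}$. $\clubsuit_\kappa^{{\rm cof},-}[J]$: there are $B^i_\delta \in P_{|\delta|}(\delta)$ for $i<\delta<\kappa$ such that for every $W\subseteq\kappa$ of size $\kappa$, $\{\delta<\kappa : \exists i<\delta\,(\sup(W\cap B^i_\delta)=\delta)\}\in J^+$. *)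

(* Ordinals below kappa are modelled by a type K carrying a
   strict well-order [lt]; the order type of (K, lt) plays the role of kappa.
   Subsets are predicates [X -> Prop]. *)
From Stdlib Require Import Relations Wellfounded.

Set Implicit Arguments.

Definition strict_well_order (K : Type) (lt : K -> K -> Prop) : Prop :=
  (forall x y z, lt x y -> lt y z -> lt x z) /\
  (forall x y, lt x y \/ x = y \/ lt y x) /\
  well_founded lt.

Definition le_of (K : Type) (lt : K -> K -> Prop) (x y : K) : Prop :=
  lt x y \/ x = y.

(* the initial segment {x | x < d}, i.e. the ordinal d *)
Definition seg (K : Type) (lt : K -> K -> Prop) (d : K) : K -> Prop :=
  fun x => lt x d.

Definition fullset (X : Type) : X -> Prop := fun _ => True.
Arguments fullset X _ : clear implicits.

Definition card_le (X Y : Type) (A : X -> Prop) (B : Y -> Prop) : Prop :=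
  exists f : {x : X | A x} -> {y : Y | B y},
    forall u v, f u = f v -> u = v.

Definition card_lt (X Y : Type) (A : X -> Prop) (B : Y -> Prop) : Prop :=
  card_le A B /\ ~ card_le B A.

Definition card_eq (X Y : Type) (A : X -> Prop) (B : Y -> Prop) : Prop :=
  card_le A B /\ card_le B A.

(* sup Z = d, where sup Z is the union of the ordinals in Z *)
Definition sup_is (K : Type) (lt : K -> K -> Prop) (Z : K -> Prop) (d : K) : Prop :=
  (forall x, Z x -> le_of lt x d) /\
  (forall g, lt g d -> exists b, Z b /\ lt g b).

Definition bounded (K : Type) (lt : K -> K -> Prop) (X : K -> Prop) : Prop :=
  exists b, forall x, X x -> le_of lt x b.

Definition is_ideal (K : Type) (lt : K -> K -> Prop) (J : (K -> Prop) -> Prop) : Prop :=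
  (exists X, J X) /\
  ~ J (fullset K) /\
  (forall X, bounded lt X -> J X) /\
  (forall X Y, J X -> (forall x, Y x -> X x) -> J Y) /\
  (forall X Y, J X -> J Y -> J (fun x => X x \/ Y x)).

Definition kappa_complete (K : Type) (J : (K -> Prop) -> Prop) : Prop :=
  forall Fam : (K -> Prop) -> Prop,
    (forall X, Fam X -> J X) ->
    card_lt Fam (fullset K) ->
    J (fun x => exists X, Fam X /\ X x).

(* kappa = nu^+ : nu < kappa is a cardinal, every ordinal below kappa has
   cardinality <= nu, and kappa has cardinality > nu. *)
Definition is_succ_of (K : Type) (lt : K -> K -> Prop) (nu : K) : Prop :=
  (forall g, lt g nu -> ~ card_le (seg lt nu) (seg lt g)) /\
  (forall d, card_le (seg lt d) (seg lt nu)) /\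
  ~ card_le (fullset K) (seg lt nu).

Definition club_cof_minus (K : Type) (lt : K -> K -> Prop)
    (J : (K -> Prop) -> Prop) : Prop :=
  exists B : K -> K -> K -> Prop,
    (forall d i, lt i d ->
       (forall x, B i d x -> lt x d) /\ card_lt (B i d) (seg lt d)) /\
    (forall W : K -> Prop, card_eq W (fullset K) ->
       ~ J (fun d => exists i, lt i d /\
                     sup_is lt (fun x => W x /\ B i d x) d)).

(* Since kappa = nu^+ with nu infinite (the clubsuit sequence provides a limit
   ordinal below kappa), Hessenberg's theorem gives an injection of kappa x kappa
   into kappa, hence a decoding map dec : kappa -> kappa x kappa under which every
   pair has unboundedly many codes.  Fixing injections e_delta : delta -> nu, let
   A^i_delta be the dec-image of B^j_delta where e_delta(j) = i; it is as small as
   B^j_delta.  Given F, choose for each alpha a code w(alpha) > alpha of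
   (alpha, F alpha), and let C be the set of closure points of w, which is
   unbounded because kappa-completeness of J makes kappa regular.  Applying the
   clubsuit principle to W = w[C]: whenever W cap B^j_delta is cofinal in delta,
   so is the set Z of closure points alpha < delta with w(alpha) in B^j_delta,
   and F|Z is contained in A^{e_delta(j)}_delta. *)

From Stdlib Require Import Relations Wellfounded Lexicographic_Product.
From Stdlib Require Import Classical ClassicalEpsilon FunctionalExtensionality ProofIrrelevance.
From Stdlib Require Import Lia PeanoNat FinFun.

Lemma proj1_sig_inj {X : Type} {P : X -> Prop} (u v : {x | P x}) :
  proj1_sig u = proj1_sig v -> u = v.
Proof. destruct u, v; simpl; apply subset_eq_compat. Qed.

Lemma card_le_of_injective {X Y : Type} {A : X -> Prop} {B : Y -> Prop} (g : X -> Y) :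
  (forall x, A x -> B (g x)) ->
  (forall x y, A x -> A y -> g x = g y -> x = y) -> card_le A B.
Proof.
  intros HB Hinj.
  exists (fun u => exist B (g (proj1_sig u)) (HB _ (proj2_sig u))).
  intros [x Hx] [y Hy] E. apply proj1_sig_inj.
  apply (f_equal (@proj1_sig _ _)) in E. exact (Hinj x y Hx Hy E).
Qed.

Lemma card_le_injective {X Y : Type} {A : X -> Prop} {B : Y -> Prop} (y0 : Y) :
  card_le A B -> exists g : X -> Y,
    (forall x, A x -> B (g x)) /\ (forall x y, A x -> A y -> g x = g y -> x = y).
Proof.
  intros [f Hf].
  exists (fun x => match excluded_middle_informative (A x) with
           | left Hx => proj1_sig (f (exist A x Hx)) | right _ => y0 end).
  split.
  - intros x Hx. destruct (excluded_middle_informative (A x)); [apply proj2_sig | contradiction].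
  - intros x y Hx Hy.
    destruct (excluded_middle_informative (A x)); [|contradiction].
    destruct (excluded_middle_informative (A y)); [|contradiction].
    intro E. apply proj1_sig_inj, Hf, (f_equal (@proj1_sig _ _)) in E. exact E.
Qed.

Lemma card_le_trans {X Y Z : Type} {A : X -> Prop} {B : Y -> Prop} {C : Z -> Prop} :
  card_le A B -> card_le B C -> card_le A C.
Proof. intros [f Hf] [g Hg]. exists (fun u => g (f u)). auto. Qed.

Lemma card_le_subset {X : Type} {A B : X -> Prop} : (forall x, A x -> B x) -> card_le A B.
Proof. intros H. apply (card_le_of_injective (fun x => x)); auto. Qed.

Lemma card_le_image {X Y : Type} (A : X -> Prop) (f : X -> Y) :
  card_le (fun y => exists x, A x /\ y = f x) A.
Proof.
  set (pre := fun u : {y | exists x, A x /\ y = f x} =>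
                constructive_indefinite_description _ (proj2_sig u)).
  exists (fun u => exist A (proj1_sig (pre u)) (proj1 (proj2_sig (pre u)))).
  intros u v E. apply (f_equal (@proj1_sig _ _)) in E. apply proj1_sig_inj.
  rewrite (proj2 (proj2_sig (pre u))), (proj2 (proj2_sig (pre v))). simpl in E. congruence.
Qed.

Definition square {X : Type} (A : X -> Prop) : X * X -> Prop :=
  fun q => A (fst q) /\ A (snd q).

Lemma card_le_square {X Y : Type} {A : X -> Prop} {B : Y -> Prop} :
  card_le A B -> card_le (square A) (square B).
Proof.
  intros [f Hf]. unshelve eexists.
  - intros [[x y] [Hx Hy]].
    exists (proj1_sig (f (exist A x Hx)), proj1_sig (f (exist A y Hy))).
    split; apply proj2_sig.
  - intros [[x y] [Hx Hy]] [[x' y'] [Hx' Hy']] E.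
    apply (f_equal (@proj1_sig _ _)) in E. injection E as E1 E2.
    apply proj1_sig_inj, Hf in E1. apply proj1_sig_inj, Hf in E2.
    injection E1 as ->. injection E2 as ->. apply proj1_sig_inj. reflexivity.
Qed.

Lemma card_le_of_small_initial_segments {P X : Type} {R : P -> P -> Prop}
    {D : P -> Prop} {T : X -> Prop} (x0 : X) :
  well_founded R -> (forall a b, R a b \/ a = b \/ R b a) ->
  (forall q, D q -> ~ card_le T (fun q' => D q' /\ R q' q)) ->
  card_le D T.
Proof.
  intros Hwf Htot Hsmall.
  (* greedy recursion: each point gets a value of T unused by its predecessors *)
  set (step := fun (q : P) (rec : forall q', R q' q -> X) =>
         epsilon (inhabits x0) (fun t => T t /\ forall q' (Hq : R q' q), D q' -> rec q' Hq <> t)).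
  set (pi := Fix Hwf (fun _ => X) step).
  assert (pi_eq : forall q, pi q = step q (fun q' _ => pi q')).
  { intro q. apply (Fix_eq Hwf (fun _ => X) step). intros q1 f g Hfg.
    assert (f = g) as -> by (extensionality y; extensionality p; apply Hfg). reflexivity. }
  assert (pi_spec : forall q, D q -> T (pi q) /\ forall q', R q' q -> D q' -> pi q' <> pi q).
  { intros q Dq. rewrite (pi_eq q). apply epsilon_spec.
    apply NNPP. intro Hfull. apply (Hsmall q Dq).
    apply (card_le_trans (B := fun t => exists q', (D q' /\ R q' q) /\ t = pi q'));
      [|apply card_le_image].
    apply card_le_subset. intros t Tt. apply NNPP. intro Hnew. apply Hfull.
    exists t. split; [exact Tt|]. intros q' Hq Dq' E. apply Hnew. eauto. }
  apply (card_le_of_injective pi); [intros q Dq; apply pi_spec, Dq|].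
  intros a b Da Db E. destruct (Htot a b) as [L|[L|L]]; [| exact L |]; exfalso.
  - exact (proj2 (pi_spec b Db) a L Da E).
  - exact (proj2 (pi_spec a Da) b L Db (eq_sym E)).
Qed.

Lemma nat_not_card_le_lt (M : nat) : ~ card_le (fullset nat) (fun k => k < M).
Proof.
  intros H. destruct (card_le_injective 0 H) as [h [Hh Hinj]].
  assert (Hsurj : bSurjective (S M) h).
  { apply bInjective_bSurjective.
    - intros x _. specialize (Hh x I). lia.
    - intros x y _ _. apply Hinj; exact I. }
  destruct (Hsurj M (Nat.lt_succ_diag_r M)) as [x [_ Hx]].
  specialize (Hh x I). lia.
Qed.

Lemma card_le_square_lt (N : nat) :
  card_le (square (fun k => k < N)) (fun k => k < N * N).
Proof.
  apply (card_le_of_injective (fun q => fst q * N + snd q)).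
  - intros [a b] [Ha Hb]; simpl in *. nia.
  - intros [a b] [a' b'] [Ha Hb] [Ha' Hb']; simpl in *. intro E.
    assert (a = a') as <- by nia. f_equal. lia.
Qed.

Lemma card_le_add_point {X : Type} (A : X -> Prop) (a : X) :
  card_le (fullset nat) A -> card_le (fun x => A x \/ x = a) A.
Proof.
  intros HA. destruct (card_le_injective a HA) as [e [He Hinj]].
  assert (e_in : forall n, A (e n)) by (intro n; exact (He n I)).
  assert (e_inj : forall n k, e n = e k -> n = k) by (intros n k; apply Hinj; exact I).
  set (shift := fun x y => (x = a /\ y = e 0) \/
                           (x <> a /\ exists k, x = e k /\ y = e (S k)) \/
                           (x <> a /\ (forall k, x <> e k) /\ y = x)).
  assert (Hg : exists g : X -> X, forall x, shift x (g x)).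
  { apply choice. intro x. unfold shift. destruct (classic (x = a)) as [->|Hxa]; [eauto|].
    destruct (classic (exists k, x = e k)) as [[k ->]|Hk];
      [exists (e (S k)); right; left; eauto|].
    exists x. right; right. repeat split; auto. intros k E. apply Hk; eauto. }
  destruct Hg as [g Hg]. apply (card_le_of_injective g).
  - intros x Hx. destruct (Hg x) as [[_ ->]|[[_ [k [_ ->]]]|[Hxa [_ ->]]]]; auto.
    destruct Hx; [assumption | contradiction].
  - intros x y _ _ E.
    destruct (Hg x) as [[-> Ex]|[[Hxa [k [-> Ex]]]|[Hxa [Hx Ex]]]];
    destruct (Hg y) as [[-> Ey]|[[Hya [k' [-> Ey]]]|[Hya [Hy Ey]]]];
    try reflexivity; rewrite Ex, Ey in E.
    all: try assumption; try (apply e_inj in E; first [discriminate | congruence]).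
    all: exfalso;
      first [apply (Hx (S k')) | apply (Hx 0) | apply (Hy (S k)) | apply (Hy 0)]; congruence.
Qed.

Lemma card_le_add_point_lt {X : Type} (A : X -> Prop) (a : X) {n : nat} :
  card_le A (fun k => k < n) -> card_le (fun x => A x \/ x = a) (fun k => k < S n).
Proof.
  intros HA. destruct (card_le_injective 0 HA) as [h [Hh Hinj]].
  apply (card_le_of_injective
           (fun x => if excluded_middle_informative (x = a) then n else h x)).
  - intros x Hx. destruct (excluded_middle_informative (x = a)); [lia|].
    destruct Hx as [Hx|]; [specialize (Hh x Hx); lia|contradiction].
  - intros x y Hx Hy.
    destruct (excluded_middle_informative (x = a)) as [->|Hxa];
    destruct (excluded_middle_informative (y = a)) as [->|Hya]; try reflexivity.
    + destruct Hy as [Hy|]; [specialize (Hh y Hy); lia|contradiction].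
    + destruct Hx as [Hx|]; [specialize (Hh x Hx); lia|contradiction].
    + destruct Hx as [Hx|]; [|contradiction]. destruct Hy as [Hy|]; [|contradiction].
      apply Hinj; assumption.
Qed.

Lemma slexprod_total {A B : Type} {ltA : A -> A -> Prop} {ltB : B -> B -> Prop} :
  (forall x y, ltA x y \/ x = y \/ ltA y x) -> (forall x y, ltB x y \/ x = y \/ ltB y x) ->
  forall p q, slexprod A B ltA ltB p q \/ p = q \/ slexprod A B ltA ltB q p.
Proof.
  intros totA totB [a b] [a' b'].
  destruct (totA a a') as [L|[<-|L]]; [left; now constructor| |right; right; now constructor].
  destruct (totB b b') as [M|[<-|M]]; [left | right; left | right; right];
    solve [apply right_slex; exact M | reflexivity].
Qed.

Definition maxk {K : Type} (lt : K -> K -> Prop) (a b : K) : K :=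
  if excluded_middle_informative (lt a b) then b else a.

Definition closed_under {K : Type} (lt : K -> K -> Prop) (f : K -> K) (c : K) : Prop :=
  forall c', lt c' c -> lt (f c') c.

Definition godel_lt {K : Type} (lt : K -> K -> Prop) (q' q : K * K) : Prop :=
  slexprod K (K * K) lt (slexprod K K lt lt)
    (maxk lt (fst q') (snd q'), q') (maxk lt (fst q) (snd q), q).

Section WellOrder.

Context {K : Type} {lt : K -> K -> Prop} (Hwo : strict_well_order lt).

Lemma wo_trans {x y z : K} : lt x y -> lt y z -> lt x z.
Proof. exact (proj1 Hwo x y z). Qed.

Lemma wo_total (x y : K) : lt x y \/ x = y \/ lt y x.
Proof. exact (proj1 (proj2 Hwo) x y). Qed.

Lemma wo_wf : well_founded lt.
Proof. exact (proj2 (proj2 Hwo)). Qed.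

Lemma wo_irrefl {x : K} : ~ lt x x.
Proof.
  induction x as [x IH] using (well_founded_ind wo_wf). intro H. exact (IH x H H).
Qed.

Lemma wo_le_of_not_lt {x y : K} : ~ lt x y -> le_of lt y x.
Proof. intro H. destruct (wo_total x y) as [L|[->|L]]; [contradiction|right|left]; auto. Qed.

Lemma wo_le_lt_trans {x y z : K} : le_of lt x y -> lt y z -> lt x z.
Proof. intros [H| ->] H'; [exact (wo_trans H H')|exact H']. Qed.

Lemma wo_lt_le_trans {x y z : K} : lt x y -> le_of lt y z -> lt x z.
Proof. intros H [H'| <-]; [exact (wo_trans H H')|exact H]. Qed.

Lemma wo_le_trans {x y z : K} : le_of lt x y -> le_of lt y z -> le_of lt x z.
Proof. intros H [H'| <-]; [left; exact (wo_le_lt_trans H H')|exact H]. Qed.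

Lemma wo_least (P : K -> Prop) (x : K) :
  P x -> exists m, P m /\ forall y, P y -> ~ lt y m.
Proof.
  induction x as [x IH] using (well_founded_ind wo_wf). intro Px.
  destruct (classic (exists y, P y /\ lt y x)) as [[y [Py Hyx]]|Hmin].
  - exact (IH y Hyx Py).
  - exists x. split; [exact Px|]. intros y Py Hyx. apply Hmin. eauto.
Qed.

Lemma le_maxk_l (a b : K) : le_of lt a (maxk lt a b).
Proof.
  unfold maxk. destruct (excluded_middle_informative (lt a b));
    [left; assumption|right; reflexivity].
Qed.

Lemma le_maxk_r (a b : K) : le_of lt b (maxk lt a b).
Proof.
  unfold maxk. destruct (excluded_middle_informative (lt a b)) as [_|H];
    [right; reflexivity|exact (wo_le_of_not_lt H)].
Qed.

Lemma maxk_lt (a b d : K) : lt a d -> lt b d -> lt (maxk lt a b) d.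
Proof. unfold maxk. destruct (excluded_middle_informative (lt a b)); auto. Qed.

Lemma sup_closure_points_of_sup_image (f : K -> K) (Y : K -> Prop) (d : K) :
  (forall c, lt c (f c)) -> (forall x, Y x -> lt x d) ->
  sup_is lt (fun x => (exists c, closed_under lt f c /\ x = f c) /\ Y x) d ->
  sup_is lt (fun c => lt c d /\ Y (f c) /\ closed_under lt f c) d.
Proof.
  intros Hf HY [_ Hcof]. split; [intros c [Hc _]; left; exact Hc|].
  intros g Hg.
  destruct (Hcof g Hg) as [x1 [[[c1 [C1 ->]] Y1] Hg1]].
  destruct (Hcof (f c1) (HY _ Y1)) as [x2 [[[c2 [C2 ->]] Y2] H12]].
  (* c2 <= c1 is impossible: closure of c1 would give f c2 < c1 < f c1 < f c2 *)
  assert (Hc12 : lt c1 c2).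
  { destruct (wo_total c1 c2) as [L|[<-|L]]; [exact L|exfalso; exact (wo_irrefl H12)|].
    exfalso. apply (@wo_irrefl (f c2)). exact (wo_trans (C1 c2 L) (wo_trans (Hf c1) H12)). }
  exists c2. split; [|exact (wo_trans Hg1 (C2 c1 Hc12))].
  split; [exact (wo_trans (Hf c2) (HY _ Y2))|]. split; assumption.
Qed.

Lemma nat_le_seg_of_no_max {m x0 : K} :
  lt x0 m -> (forall s, lt s m -> exists y, lt y m /\ lt s y) ->
  card_le (fullset nat) (seg lt m).
Proof.
  intros Hx0 Hnomax.
  set (next := fun s => epsilon (inhabits x0) (fun y => lt y m /\ lt s y)).
  assert (Hnext : forall s, lt s m -> lt (next s) m /\ lt s (next s))
    by (intros s Hs; apply epsilon_spec, Hnomax, Hs).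
  set (sq := fun n => Nat.iter n next x0).
  assert (sq_lt : forall n, lt (sq n) m).
  { induction n as [|n IH]; [exact Hx0|]. exact (proj1 (Hnext _ IH)). }
  assert (sq_incr : forall n k, n < k -> lt (sq n) (sq k)).
  { intros n k Hnk. induction Hnk as [|k _ IH].
    - exact (proj2 (Hnext _ (sq_lt n))).
    - exact (wo_trans IH (proj2 (Hnext _ (sq_lt k)))). }
  apply (card_le_of_injective sq); [intros n _; apply sq_lt|].
  intros n k _ _ E. destruct (Nat.lt_total n k) as [L|[L|L]]; [|exact L|]; exfalso;
    apply sq_incr in L; rewrite E in L; exact (wo_irrefl L).
Qed.

Lemma seg_finite_of_not_infinite {m : K} :
  ~ card_le (fullset nat) (seg lt m) -> exists n, card_le (seg lt m) (fun k => k < n).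
Proof.
  induction m as [m IH] using (well_founded_ind wo_wf). intros Hfin.
  destruct (classic (exists x, lt x m)) as [[x0 Hx0]|Hempty].
  - destruct (classic (exists s, lt s m /\ forall x, lt x m -> le_of lt x s))
      as [[s [Hs Hmax]]|Hnomax].
    + destruct (IH s Hs) as [n Hn].
      { intro C. apply Hfin, (card_le_trans C), card_le_subset.
        intros x Hx. exact (wo_trans Hx Hs). }
      exists (S n). exact (card_le_trans (card_le_subset Hmax) (card_le_add_point_lt _ s Hn)).
    + exfalso. apply Hfin, (nat_le_seg_of_no_max Hx0).
      intros s Hs. apply NNPP. intro Hno. apply Hnomax. exists s. split; [exact Hs|].
      intros x Hx. apply wo_le_of_not_lt. intro Hsx. apply Hno. eauto.
  - exists 0. apply (card_le_of_injective (fun _ => 0)); [intros x Hx|intros x y Hx];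
      exfalso; apply Hempty; exists x; exact Hx.
Qed.

Lemma godel_lt_wf : well_founded (godel_lt lt).
Proof.
  apply (wf_inverse_image _ _ _ (fun q : K * K => (maxk lt (fst q) (snd q), q))).
  apply wf_slexprod; [exact wo_wf|]. apply wf_slexprod; exact wo_wf.
Qed.

Lemma godel_lt_total (p q : K * K) : godel_lt lt p q \/ p = q \/ godel_lt lt q p.
Proof.
  unfold godel_lt.
  destruct (slexprod_total wo_total (slexprod_total wo_total wo_total)
             (maxk lt (fst p) (snd p), p) (maxk lt (fst q) (snd q), q)) as [L|[L|L]]; auto.
  right; left. injection L; auto.
Qed.

Lemma godel_lt_bound {q' q : K * K} :
  godel_lt lt q' q -> square (fun x => le_of lt x (maxk lt (fst q) (snd q))) q'.
Proof.
  intros H.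
  assert (Hm : le_of lt (maxk lt (fst q') (snd q')) (maxk lt (fst q) (snd q))).
  { inversion H; subst; [left; assumption|right; reflexivity]. }
  split; eapply wo_le_trans; [apply le_maxk_l|exact Hm|apply le_maxk_r|exact Hm].
Qed.

Lemma card_le_square_seg (d : K) :
  card_le (fullset nat) (seg lt d) -> card_le (square (seg lt d)) (seg lt d).
Proof.
  induction d as [d IH] using (well_founded_ind wo_wf). intros Hinf.
  destruct (classic (exists g, lt g d /\ card_le (seg lt d) (seg lt g)))
    as [[g [Hg Hdg]]|Hcard].
  - apply (card_le_trans (card_le_square Hdg)).
    apply (card_le_trans (IH g Hg (card_le_trans Hinf Hdg))).
    apply card_le_subset. intros x Hx. exact (wo_trans Hx Hg).
  - apply (card_le_of_small_initial_segments d godel_lt_wf godel_lt_total).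
    intros [a b] [Ha Hb] Hsmall. simpl in Ha, Hb.
    set (m := maxk lt a b).
    assert (Hm : lt m d) by (apply maxk_lt; assumption).
    assert (Hd_m : card_le (seg lt d) (square (fun x => le_of lt x m))).
    { apply (card_le_trans Hsmall), card_le_subset.
      intros q' [_ Hq']. exact (godel_lt_bound Hq'). }
    destruct (classic (card_le (fullset nat) (seg lt m))) as [Hminf|Hmfin].
    + apply Hcard. exists m. split; [exact Hm|].
      apply (card_le_trans Hd_m), (card_le_trans (card_le_square (card_le_add_point _ m Hminf))).
      exact (IH m Hm Hminf).
    + destruct (seg_finite_of_not_infinite Hmfin) as [n Hn].
      apply (nat_not_card_le_lt (S n * S n)).
      apply (card_le_trans Hinf), (card_le_trans Hd_m).
      apply (card_le_trans (card_le_square (card_le_add_point_lt _ m Hn))), card_le_square_lt.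
Qed.

End WellOrder.

Section Successor.

Context {K : Type} {lt : K -> K -> Prop} {nu : K} {J : (K -> Prop) -> Prop}
  (Hwo : strict_well_order lt) (Hsucc : is_succ_of lt nu)
  (HJ : is_ideal lt J) (Hcomp : kappa_complete J).

Lemma no_greatest (m : K) : exists m', lt m m'.
Proof.
  destruct HJ as [_ [Hfull [Hbdd _]]]. apply NNPP. intro Hmax.
  apply Hfull, Hbdd. exists m. intros x _. apply (wo_le_of_not_lt Hwo). intro L. eauto.
Qed.

Lemma card_full_unbounded (X : K -> Prop) :
  card_le (fullset K) X -> forall g, exists x, X x /\ lt g x.
Proof.
  intros HX g. apply NNPP. intro Hbdd.
  destruct (no_greatest g) as [g' Hg']. destruct Hsucc as [_ [Hall Hbig]].
  apply Hbig, (card_le_trans HX), (card_le_trans (B := seg lt g')), Hall.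
  apply card_le_subset. intros x Xx.
  apply (wo_le_lt_trans Hwo (y := g)), Hg'. apply (wo_le_of_not_lt Hwo). eauto.
Qed.

Lemma unbounded_card_full (X : K -> Prop) :
  (forall g, exists x, X x /\ lt g x) -> card_le (fullset K) X.
Proof.
  intros Hunb. apply NNPP. intro Hsmall.
  destruct HJ as [_ [Hfull [Hbdd [Hsub _]]]].
  set (Fam := fun S : K -> Prop => exists x, X x /\ S = seg lt x).
  assert (HFam : card_le Fam X) by exact (card_le_image X (seg lt)).
  apply Hfull, (Hsub (fun x => exists S, Fam S /\ S x)).
  - apply Hcomp.
    + intros S [x [_ ->]]. apply Hbdd. exists x. intros y Hy. left. exact Hy.
    + split; [exact (card_le_trans HFam (card_le_subset (fun _ _ => I)))|].
      intro C. exact (Hsmall (card_le_trans C HFam)).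
  - intros y _. destruct (Hunb y) as [x [Xx Hyx]].
    exists (seg lt x). split; [exists x; auto|exact Hyx].
Qed.

Lemma small_image_bounded {X : Type} (S : X -> Prop) (f : X -> K) :
  card_le S (seg lt nu) -> exists b, forall x, S x -> lt (f x) b.
Proof.
  intros HS. apply NNPP. intro Hunb. apply (proj2 (proj2 Hsucc)).
  apply (card_le_trans (B := fun y => exists x, S x /\ y = f x)).
  - apply unbounded_card_full. intro g. destruct (no_greatest g) as [g' Hg'].
    apply NNPP. intro Hno. apply Hunb. exists g'. intros x Sx.
    apply NNPP. intro Hfx. apply Hno. exists (f x). split; [eauto|].
    exact (wo_lt_le_trans Hwo Hg' (wo_le_of_not_lt Hwo Hfx)).
  - exact (card_le_trans (card_le_image S f) HS).
Qed.

Lemma nat_le_nu_of_club : club_cof_minus lt J -> card_le (fullset nat) (seg lt nu).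
Proof.
  intros [B [HB HBguess]]. destruct HJ as [[X0 HX0] [_ [_ [Hsub _]]]].
  assert (Hlim : exists d i, lt i d /\ sup_is lt (fun x => fullset K x /\ B i d x) d).
  { apply NNPP. intro Hno. apply (HBguess (fullset K)).
    - split; apply card_le_subset; auto.
    - apply (Hsub X0 _ HX0). intros d [i [Hi Hs]]. exfalso. apply Hno. eauto. }
  destruct Hlim as [d [i [Hi [_ Hcof]]]].
  apply (card_le_trans (B := seg lt d)); [|exact (proj1 (proj2 Hsucc) d)].
  apply (nat_le_seg_of_no_max Hwo Hi). intros s Hs. destruct (Hcof s Hs) as [b [[_ Bb] Hsb]].
  exists b. split; [exact (proj1 (HB d i Hi) b Bb)|exact Hsb].
Qed.

Hypothesis nat_le_nu : card_le (fullset nat) (seg lt nu).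

Lemma card_pairs_le : card_le (fullset (K * K)) (fullset K).
Proof.
  apply (card_le_of_small_initial_segments nu (godel_lt_wf Hwo) (godel_lt_total Hwo)).
  intros [a b] _ Hsmall.
  destruct (no_greatest (maxk lt a b)) as [m Hm]. destruct Hsucc as [_ [Hall Hbig]].
  apply Hbig, (card_le_trans Hsmall), (card_le_trans (B := square (seg lt m))).
  - apply card_le_subset. intros q' [_ Hq'].
    destruct (godel_lt_bound Hwo Hq') as [H1 H2].
    split; [exact (wo_le_lt_trans Hwo H1 Hm)|exact (wo_le_lt_trans Hwo H2 Hm)].
  - exact (card_le_trans (card_le_square (Hall m)) (card_le_square_seg Hwo nu nat_le_nu)).
Qed.

Lemma exists_decoder : exists dec : K -> K * K, forall q g, exists w, lt g w /\ dec w = q.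
Proof.
  destruct (card_le_injective nu card_pairs_le) as [p [_ Hp]].
  assert (p_inj : forall u v, p u = p v -> u = v) by (intros u v; apply Hp; exact I).
  set (unpair := fun w => epsilon (inhabits (nu, nu)) (fun q => p q = w)).
  assert (unpair_pair : forall q, unpair (p q) = q).
  { intro q. apply p_inj. exact (epsilon_spec _ (fun q' => p q' = p q) (ex_intro _ q eq_refl)). }
  (* w codes q when w = p (p q, z); every q has a code for each z *)
  exists (fun w => unpair (fst (unpair w))). intros q g.
  destruct (card_full_unbounded (fun w => exists z, w = p (p q, z))) with (g := g)
    as [w [[z ->] Hgw]].
  { apply (card_le_of_injective (fun z => p (p q, z))); [eauto|].
    intros z z' _ _ E. apply p_inj in E. congruence. }
  exists (p (p q, z)). split; [exact Hgw|]. cbv beta. rewrite unpair_pair. exact (unpair_pair q).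
Qed.

Lemma closure_points_unbounded (f : K -> K) (g : K) :
  exists c, lt g c /\ closed_under lt f c.
Proof.
  assert (Hstep : forall x, exists u, lt x u /\ forall c, lt c x -> lt (f c) u).
  { intro x. destruct (small_image_bounded (seg lt x) f (proj1 (proj2 Hsucc) x)) as [b Hb].
    destruct (no_greatest (maxk lt b x)) as [u Hu]. exists u. split.
    - exact (wo_le_lt_trans Hwo (le_maxk_r Hwo b x) Hu).
    - intros c Hc. exact (wo_trans Hwo (Hb c Hc) (wo_le_lt_trans Hwo (le_maxk_l b x) Hu)). }
  destruct (choice _ Hstep) as [step Hstep'].
  set (iterate := fun n => Nat.iter n step g).
  destruct (small_image_bounded (fullset nat) iterate nat_le_nu) as [b Hb].
  destruct (wo_least Hwo (fun u => forall n, le_of lt (iterate n) u) b) as [c [Hc Hleast]].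
  { intro n. left. exact (Hb n I). }
  exists c. split; [exact (wo_lt_le_trans Hwo (proj1 (Hstep' g)) (Hc 1))|].
  intros c' Hc'.
  assert (Hn : exists n, lt c' (iterate n)).
  { apply NNPP. intro Hno. apply (Hleast c'); [|exact Hc'].
    intro n. apply (wo_le_of_not_lt Hwo). intro L. apply Hno. eauto. }
  destruct Hn as [n Hn].
  exact (wo_lt_le_trans Hwo (proj2 (Hstep' (iterate n)) c' Hn) (Hc (S n))).
Qed.

End Successor.

Definition guessing_set {K : Type} (lt : K -> K -> Prop) (B : K -> K -> K -> Prop)
    (dec : K -> K * K) (e : K -> K -> K) (d i : K) (q : K * K) : Prop :=
  exists j, lt j d /\ e d j = i /\ exists w, B j d w /\ dec w = q.

Section Guessing.

Context {K : Type} {lt : K -> K -> Prop} {nu : K} {J : (K -> Prop) -> Prop}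
  (Hwo : strict_well_order lt) (Hsucc : is_succ_of lt nu)
  (HJ : is_ideal lt J) (Hcomp : kappa_complete J)
  (nat_le_nu : card_le (fullset nat) (seg lt nu))
  {B : K -> K -> K -> Prop}
  (B_club : forall d i, lt i d -> (forall x, B i d x -> lt x d) /\ card_lt (B i d) (seg lt d))
  (B_guess : forall W, card_eq W (fullset K) ->
     ~ J (fun d => exists i, lt i d /\ sup_is lt (fun x => W x /\ B i d x) d))
  {dec : K -> K * K} (dec_codes : forall q g, exists w, lt g w /\ dec w = q)
  {e : K -> K -> K} (e_maps : forall d x, lt x d -> lt (e d x) nu)
  (e_inj : forall d x y, lt x d -> lt y d -> e d x = e d y -> x = y).

Lemma guessing_set_small (d i : K) :
  lt i nu -> card_lt (guessing_set lt B dec e d i) (seg lt nu).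
Proof.
  intros Hi.
  assert (Hd : card_le (seg lt d) (seg lt nu))
    by exact (card_le_of_injective (e d) (e_maps d) (e_inj d)).
  destruct (classic (exists j, lt j d /\ e d j = i)) as [[j [Hj <-]]|Hnone].
  - assert (HA : card_le (guessing_set lt B dec e d (e d j)) (B j d)).
    { apply (card_le_trans (B := fun q => exists w, B j d w /\ q = dec w)); [|apply card_le_image].
      apply card_le_subset. intros q [j' [Hj' [E [w [Bw <-]]]]].
      rewrite (e_inj d j' j Hj' Hj E) in Bw. eauto. }
    destruct (proj2 (B_club d j Hj)) as [HBd HdB]. split.
    + exact (card_le_trans HA (card_le_trans HBd Hd)).
    + intro C. exact (HdB (card_le_trans Hd (card_le_trans C HA))).
  - split.
    + apply (card_le_of_injective (fun _ => nu)); [intros q|intros q q' ?];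
        intros [j [Hj [Ej _]]]; exfalso; eauto.
    + intros [f _]. destruct (f (exist _ i Hi)) as [q [j [Hj [Ej _]]]]. eauto.
Qed.

Lemma guessing_set_guesses (F : K -> K) :
  ~ J (fun d => exists i, lt i nu /\ exists Z : K -> Prop,
         (forall x, Z x -> lt x d) /\ sup_is lt Z d /\
         (forall a, Z a -> guessing_set lt B dec e d i (a, F a))).
Proof.
  destruct (choice (fun c w => lt c w /\ dec w = (c, F c)) (fun c => dec_codes (c, F c) c))
    as [code Hcode].
  set (W := fun w => exists c, closed_under lt code c /\ w = code c).
  assert (HW : card_eq W (fullset K)).
  { split; [apply card_le_subset; intros; exact I|].
    apply (unbounded_card_full HJ Hcomp). intro g.
    destruct (closure_points_unbounded Hwo Hsucc HJ Hcomp nat_le_nu code g) as [c [Hgc Cc]].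
    exists (code c). split; [exists c; auto|exact (wo_trans Hwo Hgc (proj1 (Hcode c)))]. }
  intro HJF. apply (B_guess W HW), (proj1 (proj2 (proj2 (proj2 HJ))) _ _ HJF).
  intros d [j [Hj Hsup]].
  exists (e d j). split; [exact (e_maps d j Hj)|].
  exists (fun a => lt a d /\ B j d (code a) /\ closed_under lt code a). split; [|split].
  - intros a [Ha _]. exact Ha.
  - apply (sup_closure_points_of_sup_image Hwo);
      [intro c; apply Hcode|apply (B_club d j Hj)|exact Hsup].
  - intros a [_ [Ba _]]. exists j. split; [exact Hj|]. split; [reflexivity|].
    exists (code a). split; [exact Ba|apply Hcode].
Qed.

End Guessing.

Theorem lemma3p8 (K : Type) (lt : K -> K -> Prop)
  (Hwo : strict_well_order lt) (nu : K) (Hsucc : is_succ_of lt nu)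
  (J : (K -> Prop) -> Prop) (HJ : is_ideal lt J) (Hcomp : kappa_complete J)
  (Hclub : club_cof_minus lt J) :
  exists A : K -> K -> (K * K) -> Prop,   (* A d i = A^i_d *)
    (forall d i, lt i nu -> card_lt (A d i) (seg lt nu)) /\
    (forall F : K -> K,
       ~ J (fun d => exists i, lt i nu /\
              exists Z : K -> Prop,
                (forall x, Z x -> lt x d) /\ sup_is lt Z d /\
                (forall a, Z a -> A d i (a, F a)))).
Proof.
  pose proof (nat_le_nu_of_club Hwo Hsucc HJ Hclub) as Hnat.
  destruct Hclub as [B [B_club B_guess]].
  destruct (exists_decoder Hwo Hsucc HJ Hnat) as [dec dec_codes].
  destruct (choice _ (fun d => card_le_injective nu (proj1 (proj2 Hsucc) d))) as [e He].
  assert (e_maps : forall d x, lt x d -> lt (e d x) nu) by (intro d; apply (He d)).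
  assert (e_inj : forall d x y, lt x d -> lt y d -> e d x = e d y -> x = y)
    by (intro d; apply (He d)).
  exists (guessing_set lt B dec e). split.
  - intros d i. exact (guessing_set_small B_club e_maps e_inj d i).
  - intro F.
    exact (guessing_set_guesses Hwo Hsucc HJ Hcomp Hnat B_club B_guess dec_codes e_maps F).
Qed.
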